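(* Let $a\ge 0$, $\Delta t>0$, and let $z(\omega)$ be a real-valued function of the frequency $\omega$ with values in $[0,z_{\max}]$, where $z_{\max}=\max_\omega z(\omega)>0$. For each $\omega$ consider the quadratic $$(2+a\Delta t)^{2}\xi^{2}-4\big(2+a\Delta t-2\Delta t^{2}z(\omega)\big)\xi+(2-a\Delta t)\big(2+a\Delta t-2\Delta t^{2}z(\omega)\big)=0 .$$ If $$\Delta t\le\frac{2}{\sqrt{3\,z_{\max}}},$$ then both roots satisfy $|\xi|\le 1$ for every $\omega$.
   Context: This quadratic is the von Neumann characteristic equation of the semi-implicit (Nesterov-type) two-step scheme for $u_{tt}+au_t=-\nabla E$: $$v^{n}=u^{n}+\frac{2-a\Delta t}{2+a\Delta t}(u^{n}-u^{n-1}),\qquad u^{n+1}=v^{n}-\frac{2\Delta t^{2}}{2+a\Delta t}\nabla E(v^{n}),$$ obtained by linearizing $\nabla E$, writing the discrete Fourier transform of the linearized gradient of a grid function $w$ as $z(\omega)W(\omega)$ ($z$ the ''gradient amplifier''), and substituting $U^{n\pm m}=\xi^{\pm m}U^n$. *)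

(* roots of the quadratic may be complex, so we work in an
   arbitrary numeric algebraically closed field C (e.g. the complex numbers),
   with all parameters real (nonnegative / positive elements of C). *)
From HB Require Import structures.
From mathcomp Require Import all_boot all_order all_algebra.
Set Implicit Arguments. Unset Strict Implicit. Unset Printing Implicit Defensive.
Import Order.TTheory GRing.Theory Num.Theory.
Local Open Scope ring_scope.

Definition char_quad (C : numClosedFieldType) (a dt zw xi : C) : C :=
  (2 + a * dt) ^+ 2 * xi ^+ 2
  - 4 * (2 + a * dt - 2 * dt ^+ 2 * zw) * xi
  + (2 - a * dt) * (2 + a * dt - 2 * dt ^+ 2 * zw).

From HB Require Import structures.
From mathcomp Require Import all_boot all_order all_algebra.
From mathcomp Require Import ring.
Set Implicit Arguments. Unset Strict Implicit. Unset Printing Implicit Defensive.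
Import Order.TTheory GRing.Theory Num.Theory.
Local Open Scope ring_scope.

(* With [S = a dt] and [T = dt^2 z], the CFL condition reads [3 T <= 4], and the
   quadratic [A x^2 + b x + c] then satisfies Jury's conditions [p(1) >= 0],
   [p(-1) >= 0], [c <= A]. These exclude real roots outside [-1, 1], where [p]
   is positive, while a non-real root pairs with its conjugate, so by Vieta
   [|xi|^2 = c / A <= 1]. *)

Lemma quadratic_gt0_gt1 (R : numDomainType) (A b c x : R) :
  0 < A -> 0 <= A + b + c -> 0 <= 2 * A + b -> 1 < x ->
  0 < A * x ^+ 2 + b * x + c.
Proof.
move=> A_gt0 p1_ge0 slope_ge0 x_gt1.
have -> : A * x ^+ 2 + b * x + c = (A + b + c) + (x - 1) * (A * (x - 1) + (2 * A + b))
  by ring.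
have x1_gt0 : 0 < x - 1 by rewrite subr_gt0.
by rewrite ltr_wpDl // mulr_gt0 // ltr_wpDr // mulr_gt0.
Qed.

Lemma nonreal_quadratic_root_normCK (C : numClosedFieldType) (A b c x : C) :
  A \is Num.real -> b \is Num.real -> c \is Num.real -> x \isn't Num.real ->
  A * x ^+ 2 + b * x + c = 0 -> A * `|x| ^+ 2 = c.
Proof.
move=> A_real b_real c_real x_nonreal root_x.
have root_xc : A * x^* ^+ 2 + b * x^* + c = 0.
  by rewrite -[A]conj_Creal // -[b]conj_Creal // -[c]conj_Creal // -!rmorphXn
    -!rmorphM -!rmorphD root_x rmorph0.
have x_neq_xc : x - x^* != 0 by rewrite subr_eq0 eq_sym -CrealE.
have sum_x_xc : A * (x + x^*) = - b.
  apply/eqP; rewrite -subr_eq0 opprK.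
  have : (x - x^*) * (A * (x + x^*) + b) = 0.
    by rewrite -[RHS](subrr 0) -{1}root_x -root_xc; ring.
  by move/eqP; rewrite mulf_eq0 (negbTE x_neq_xc).
rewrite normCK; apply/eqP; rewrite -subr_eq0 -oppr_eq0 -[X in _ == X]root_x.
by rewrite -[b]opprK -sum_x_xc; apply/eqP; ring.
Qed.

Lemma quadratic_root_norm_le1 (C : numClosedFieldType) (A b c x : C) :
  0 < A -> b \is Num.real -> c \is Num.real ->
  c <= A -> 0 <= A + b + c -> 0 <= A - b + c ->
  A * x ^+ 2 + b * x + c = 0 -> `|x| <= 1.
Proof.
move=> A_gt0 b_real c_real c_leA p1_ge0 pm1_ge0 root_x.
have A_real : A \is Num.real by exact: gtr0_real.
have Ac_ge0 : 0 <= A - c by rewrite subr_ge0.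
have [x_real | x_nonreal] := boolP (x \is Num.real).
  rewrite real_ler_norml // !real_leNgt ?realN //; apply/andP; split; apply/negP.
    move=> x_ltm1; suff : 0 < A * (- x) ^+ 2 + (- b) * (- x) + c.
      by rewrite sqrrN mulrNN root_x ltxx.
    apply: quadratic_gt0_gt1 => //; last by move: x_ltm1; rewrite ltrNr.
    have -> : 2 * A - b = (A - b + c) + (A - c) by ring.
    exact: addr_ge0.
  move=> x_gt1; suff : 0 < A * x ^+ 2 + b * x + c by rewrite root_x ltxx.
  apply: quadratic_gt0_gt1 => //.
  have -> : 2 * A + b = (A + b + c) + (A - c) by ring.
  exact: addr_ge0.
rewrite -(expr_le1 (n := 2)) // -(ler_pM2l A_gt0) mulr1.
by rewrite (nonreal_quadratic_root_normCK A_real b_real c_real x_nonreal root_x).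
Qed.

(* [char_quad a dt zw xi] with [S = a * dt] and [T = dt ^+ 2 * zw]. *)
Lemma damped_quad_root_norm_le1 (C : numClosedFieldType) (S T xi : C) :
  0 <= S -> 0 <= T -> 3 * T <= 4 ->
  (2 + S) ^+ 2 * xi ^+ 2 - 4 * (2 + S - 2 * T) * xi + (2 - S) * (2 + S - 2 * T) = 0 ->
  `|xi| <= 1.
Proof.
move=> S_ge0 T_ge0 T_le root_xi.
have T_gap : 0 <= 4 - 3 * T by rewrite subr_ge0.
have [S_real T_real] : S \is Num.real /\ T \is Num.real by split; exact: ger0_real.
apply: (@quadratic_root_norm_le1 _ ((2 + S) ^+ 2) (- (4 * (2 + S - 2 * T)))
                                    ((2 - S) * (2 + S - 2 * T))).
- by rewrite exprn_gt0 // ltr_wpDr.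
- by rewrite !(realN, realM, realB, realD, realn).
- by rewrite !(realM, realB, realD, realn).
- rewrite -subr_ge0 -(pmulr_rge0 _ (ltr0n _ 3)).
  have -> : 3%:R * ((2 + S) ^+ 2 - (2 - S) * (2 + S - 2 * T)) =
            2 * S * (4 - 3 * T) + 4 * S + 6 * S ^+ 2 + 12 * T by ring.
  by rewrite !addr_ge0 ?mulr_ge0 ?exprn_ge0 ?ler0n.
- have -> : (2 + S) ^+ 2 - 4 * (2 + S - 2 * T) + (2 - S) * (2 + S - 2 * T) =
            2 * T * (2 + S) by ring.
  by rewrite !mulr_ge0 ?addr_ge0 ?ler0n.
- have -> : (2 + S) ^+ 2 - - (4 * (2 + S - 2 * T)) + (2 - S) * (2 + S - 2 * T) =
            4 * (4 - 3 * T) + 8 * S + 2 * T * S by ring.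
  by rewrite !addr_ge0 ?mulr_ge0 ?ler0n.
- by rewrite -root_xi; ring.
Qed.

Lemma cfl_sqr (C : numClosedFieldType) (dt zmax : C) :
  0 <= dt -> 0 < zmax -> dt <= 2 / sqrtC (3 * zmax) -> 3 * (dt ^+ 2 * zmax) <= 4.
Proof.
move=> dt_ge0 zmax_gt0 cfl.
have r_gt0 : 0 < sqrtC (3 * zmax) by rewrite sqrtC_gt0 mulr_gt0.
have dtr_le2 : dt * sqrtC (3 * zmax) <= 2 by rewrite -ler_pdivlMr.
have : (dt * sqrtC (3 * zmax)) ^+ 2 <= 2 ^+ 2.
  by rewrite ler_pXn2r // ?nnegrE ?ler0n // mulr_ge0 // ltW.
by rewrite exprMn sqrtCK mulrCA -natrX; apply.
Qed.

Theorem mainTheorem6 (C : numClosedFieldType) (Omega : Type)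
  (a dt zmax : C) (z : Omega -> C)
  (ha : 0 <= a) (hdt : 0 < dt)
  (hz : forall w, 0 <= z w <= zmax)
  (hzmax : exists w0, z w0 = zmax)
  (hzpos : 0 < zmax)
  (hcfl : dt <= 2 / sqrtC (3 * zmax)) :
  forall (w : Omega) (xi : C), char_quad a dt (z w) xi = 0 -> `|xi| <= 1.
Proof.
move=> w xi root_xi; have /andP[zw_ge0 zw_le] := hz w.
have dt_ge0 := ltW hdt.
apply: (@damped_quad_root_norm_le1 _ (a * dt) (dt ^+ 2 * z w)).
- exact: mulr_ge0.
- by rewrite mulr_ge0 ?exprn_ge0.
- apply: le_trans (cfl_sqr dt_ge0 hzpos hcfl).
  by rewrite ler_pM2l // ler_wpM2l ?exprn_ge0.
- by rewrite -root_xi /char_quad; ring.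
Qed.
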